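(* Let $M$ be a locally-finite map in the hyperbolic plane with exactly one end such that $V(M)$ is a locally finite collection of vertices, and suppose a group $G\le\mathrm{Isom}(\mathbb{H}^2)$ acts quasi-transitively on $M$. Then $G$ is finitely generated.
   Context: A map $M$ in a surface $X$ is a (simple, connected, infinite) graph embedded in $X$: vertices are distinct points, edges are curves meeting only at common endpoints, and each face is homeomorphic to an open disc. Locally-finite and number of ends refer to the underlying graph. $V(M)$ is a locally finite collection of vertices if every compact subset contains only finitely many vertices of $M$. $G$ acts on $M$ if each $g\in G$ maps $M$ to itself with $g(V(M))=V(M)$ inducing a graph automorphism; quasi-transitively means finitely many orbits on $V(M)$. *)

From HB Require Import structures.
From mathcomp Require Import all_boot all_order all_algebra.
From mathcomp Require Import all_classical all_reals all_analysis.
Set Implicit Arguments. Unset Strict Implicit. Unset Printing Implicit Defensive.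
Import Order.TTheory GRing.Theory Num.Theory.
Import numFieldNormedType.Exports.
Local Open Scope classical_set_scope.
Local Open Scope ring_scope.

Definition Hset (R : realType) : set (R * R) := [set p | 0 < p.2].

(* H^2 as the subtype of R^2 = R * R, with the subspace topology
   (mathcomp-analysis equips [set_type A] with the initial topology). *)
Arguments Hset R : clear implicits.
Definition H2 (R : realType) := set_type (Hset R).
HB.instance Definition _ (R : realType) := Topological.copy (H2 R) (set_type (Hset R)).

Definition acosh (R : realType) (x : R) : R := ln (x + Num.sqrt (x ^+ 2 - 1)).

Definition hdist (R : realType) (p q : H2 R) : R :=
  let a := set_val p in let b := set_val q in
  acosh (1 + ((a.1 - b.1) ^+ 2 + (a.2 - b.2) ^+ 2) / (2 * a.2 * b.2)).

Definition isometry (R : realType) (f : H2 R -> H2 R) : Prop :=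
  bijective f /\ forall p q, hdist (f p) (f q) = hdist p q.

Definition isom_subgroup (R : realType) (G : set (H2 R -> H2 R)) : Prop :=
  [/\ (forall g, G g -> isometry g),
      G id,
      (forall g h, G g -> G h -> G (g \o h)) &
      (forall g, G g -> exists2 h, G h & cancel g h /\ cancel h g)].

Inductive generated (T : Type) (S : set (T -> T)) : (T -> T) -> Prop :=
  | gen_id : generated S id
  | gen_gen s : S s -> generated S s
  | gen_inv s h : S s -> cancel s h -> cancel h s -> generated S h
  | gen_comp f g : generated S f -> generated S g -> generated S (f \o g).

Definition finitely_generated (T : Type) (G : set (T -> T)) : Prop :=
  exists S : set (T -> T), [/\ finite_set S, S `<=` G &
    forall g, G g -> generated S g].

Definition simple_graph (V : Type) (adj : V -> V -> Prop) : Prop :=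
  (forall u v, adj u v -> adj v u) /\ (forall u, ~ adj u u).

Inductive reach (V : Type) (adj : V -> V -> Prop) (P : set V) (u : V) : V -> Prop :=
  | reach_refl : P u -> reach adj P u u
  | reach_step w v : reach adj P u w -> adj w v -> P v -> reach adj P u v.

Definition graph_connected (V : Type) (adj : V -> V -> Prop) : Prop :=
  forall u v, reach adj setT u v.

Definition graph_locally_finite (V : Type) (adj : V -> V -> Prop) : Prop :=
  forall v, finite_set [set w | adj v w].

Definition ray (V : Type) (adj : V -> V -> Prop) (r : nat -> V) : Prop :=
  injective r /\ forall n, adj (r n) (r n.+1).

Definition equiv_rays (V : Type) (adj : V -> V -> Prop) (r1 r2 : nat -> V) : Prop :=
  forall S : set V, finite_set S ->
    exists N, [/\ (forall k, (N <= k)%N -> ~ S (r1 k)),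
                  (forall k, (N <= k)%N -> ~ S (r2 k)) &
                  reach adj (~` S) (r1 N) (r2 N)].

Definition one_ended (V : Type) (adj : V -> V -> Prop) : Prop :=
  (exists r, ray adj r) /\
  (forall r1 r2, ray adj r1 -> ray adj r2 -> equiv_rays adj r1 r2).

Definition unit_interval (R : realType) : set R := [set t | 0 <= t <= 1].
Definition open_unit_interval (R : realType) : set R := [set t | 0 < t < 1].

Arguments unit_interval R : clear implicits.
Arguments open_unit_interval R : clear implicits.

Definition open_disc (R : realType) : set (R * R) :=
  [set p | p.1 ^+ 2 + p.2 ^+ 2 < 1].
Arguments open_disc R : clear implicits.

Definition homeomorphic (X Y : topologicalType) (A : set X) (B : set Y) : Prop :=
  exists (f : X -> Y) (g : Y -> X),
    [/\ {within A, continuous f}, {within B, continuous g},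
        f @` A `<=` B, g @` B `<=` A &
        (forall a, A a -> g (f a) = a) /\ (forall b, B b -> f (g b) = b)].

Definition edge_img (R : realType) (V : Type) (arc : V -> V -> R -> H2 R) (u v : V)
  : set (H2 R) := arc u v @` unit_interval R.

Definition map_points (R : realType) (V : Type) (adj : V -> V -> Prop)
  (pos : V -> H2 R) (arc : V -> V -> R -> H2 R) : set (H2 R) :=
  range pos `|` \bigcup_(e in [set e : V * V | adj e.1 e.2]) edge_img arc e.1 e.2.

(* A map in H^2: a simple, connected, infinite graph (V, adj) embedded via
   [pos] (vertices) and [arc u v] (the edge uv, parametrised on [0,1]). *)
Definition is_map (R : realType) (V : Type) (adj : V -> V -> Prop)
  (pos : V -> H2 R) (arc : V -> V -> R -> H2 R) : Prop :=
  [/\ simple_graph adj, graph_connected adj & ~ finite_set [set: V]] /\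
  injective pos /\
  (forall u v, adj u v ->
     [/\ {within unit_interval R, continuous arc u v},
         {in unit_interval R &, injective (arc u v)},
         arc u v 0 = pos u, arc u v 1 = pos v &
         edge_img arc u v = edge_img arc v u]) /\
  (forall u v t w, adj u v -> open_unit_interval R t -> arc u v t <> pos w) /\
  (forall u v u' v' x, adj u v -> adj u' v' ->
     ~ (u = u' /\ v = v') -> ~ (u = v' /\ v = u') ->
     edge_img arc u v x -> edge_img arc u' v' x ->
     exists w, [/\ w = u \/ w = v, w = u' \/ w = v' & x = pos w]) /\
  (forall x, ~ map_points adj pos arc x ->
     homeomorphic (connected_component (~` map_points adj pos arc) x)
                  (open_disc R)).

Definition vertices_locally_finite (R : realType) (V : Type) (pos : V -> H2 R) : Prop :=
  forall K : set (H2 R), compact K -> finite_set [set v | K (pos v)].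

Definition acts_on_map (R : realType) (V : Type) (adj : V -> V -> Prop)
  (pos : V -> H2 R) (arc : V -> V -> R -> H2 R) (G : set (H2 R -> H2 R)) : Prop :=
  forall g, G g ->
    [/\ g @` map_points adj pos arc = map_points adj pos arc,
        g @` range pos = range pos &
        exists sigma : V -> V, [/\ bijective sigma,
            (forall v, pos (sigma v) = g (pos v)) &
            (forall u v, adj u v <-> adj (sigma u) (sigma v))]].

Definition quasi_transitive (R : realType) (V : Type) (pos : V -> H2 R)
  (G : set (H2 R -> H2 R)) : Prop :=
  exists F : set V, finite_set F /\
    forall v, exists w, F w /\ exists g, G g /\ g (pos w) = pos v.

From HB Require Import structures.
From mathcomp Require Import all_boot all_order all_algebra.
From mathcomp Require Import all_classical all_reals all_analysis.
From mathcomp Require Import ring lra.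
Set Implicit Arguments. Unset Strict Implicit. Unset Printing Implicit Defensive.
Import Order.TTheory GRing.Theory Num.Theory.
Local Open Scope classical_set_scope.
Local Open Scope ring_scope.

(* Choose finitely many representatives F of the vertex orbits. As the graph
   is connected, G is generated by the elements moving a vertex of F into the
   closed neighbourhood of F, and as the graph is locally finite these are
   finitely many provided only finitely many elements of G send two given
   distinct points to two given points. That holds because a distance-preserving
   map of H^2 is determined by the images of two points up to the reflection
   in the geodesic through them: in the hyperboloid model, where
   [u . v = 2 cosh d], the image of each point lies on a line orthogonal to
   the two fixed directions, and a line meets the hyperboloid twice at most. *)

Lemma reflection_coeff (F : fieldType) (N s t b b' : F) : N != 0 -> s != 0 ->
  t * (2 * b + t * N) = 0 -> t * b' + s * b + t * s * N = 0 -> t = - 2 * b / N.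
Proof.
move=> N0 s0 /eqP; rewrite mulf_eq0 => /orP[/eqP t0 | /eqP tN] h.
  move: h; rewrite t0 !mul0r add0r addr0 => /eqP; rewrite mulf_eq0 (negbTE s0).
  by move=> /eqP ->; rewrite mulr0 mul0r.
by apply: (mulIf N0); rewrite divfK // -(addKr (2 * b) (t * N)) tN addr0 mulNr.
Qed.

Lemma reach_neighbour (V : Type) (adj : V -> V -> Prop) (P : set V) x v :
  reach adj P x v -> v <> x -> exists y, adj x y.
Proof.
elim=> [//|w v' _ IH wv' _] v'x.
by have [<-|wx] := pselect (w = x); [exists v' | exact: IH].
Qed.

Section QuasiTransitiveAction.
Variables (T V : Type) (adj : V -> V -> Prop) (pos : V -> T).
Variables (G : set (T -> T)) (F : set V).
Hypothesis pos_inj : injective pos.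
Hypothesis G_comp : forall g h, G g -> G h -> G (g \o h).
Hypothesis G_inv : forall g, G g -> exists2 h, G h & cancel g h /\ cancel h g.
Hypothesis G_act : forall g, G g -> exists sigma : V -> V,
  (forall v, pos (sigma v) = g (pos v)) /\ (forall u v, adj u v -> adj (sigma u) (sigma v)).
Hypothesis F_orbits : forall v, exists w, F w /\ exists g, G g /\ g (pos w) = pos v.

Definition closed_nbhd (A : set V) : set V := A `|` \bigcup_(x in A) [set z | adj x z].

Definition nbhd_movers : set (T -> T) :=
  [set g | G g /\ exists x z, [/\ F x, closed_nbhd F z & g (pos x) = pos z]].

Lemma G_pos g y : G g -> exists y', g (pos y) = pos y'.
Proof. by move=> /G_act[sigma [sigmaE _]]; exists (sigma y). Qed.

Lemma G_adj g x x' y y' : G g -> g (pos x) = pos x' -> g (pos y) = pos y' ->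
  adj x y -> adj x' y'.
Proof.
move=> /G_act[sigma [sigmaE sigma_adj]] gx gy /sigma_adj.
by rewrite (pos_inj (etrans (sigmaE x) gx)) (pos_inj (etrans (sigmaE y) gy)).
Qed.

Lemma nbhd_movers_generate (v0 : V) : graph_connected adj ->
  forall g, G g -> generated nbhd_movers g.
Proof.
move=> conn g Gg; have [b [Fb _]] := F_orbits v0.
have gen v : reach adj setT b v ->
    forall h y, G h -> F y -> h (pos y) = pos v -> generated nbhd_movers h.
  elim=> [_|w v' _ IH wv' _] h y Gh Fy hy.
    by apply: gen_gen; split => //; exists y, b; split => //; left.
  have [y' [Fy' [h' [Gh' h'y']]]] := F_orbits w.
  have [h'' Gh'' [h'K h''K]] := G_inv Gh'.
  have -> : h = h' \o (h'' \o h) by apply/funext => x /=; rewrite h''K.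
  apply: gen_comp; first exact: IH h'y'.
  apply: gen_gen; split; first exact: G_comp.
  have [z hz] := G_pos v' Gh''.
  exists y, z; split => //=; last by rewrite hy.
  right; exists y' => //; apply: (G_adj Gh'' _ hz wv').
  by rewrite -h'y' h'K.
have [v gv] := G_pos b Gg.
exact: gen (conn b v) g b Gg Fb gv.
Qed.

Lemma finite_nbhd_movers : finite_set F -> graph_locally_finite adj ->
  (forall x, ~ adj x x) -> (forall x, exists y, adj x y) ->
  (forall P Q P' Q', P <> Q -> finite_set [set g | G g /\ g P = P' /\ g Q = Q']) ->
  finite_set nbhd_movers.
Proof.
move=> finF lf irr nbr transporters.
have finN : finite_set (closed_nbhd F).
  by rewrite finite_setU; split => //; exact: bigcup_finite.
apply: (sub_finite_set (B := \bigcup_(x in F) \bigcup_(z in closed_nbhd F)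
    \bigcup_(y in [set y | adj x y]) \bigcup_(z' in [set z' | adj z z'])
      [set g | G g /\ g (pos x) = pos z /\ g (pos y) = pos z'])).
  move=> g [Gg [x [z [Fx Nz gx]]]].
  have [y xy] := nbr x; have [z' gy] := G_pos y Gg.
  exists x => //; exists z => //; exists y => //; exists z' => //.
  exact: G_adj gx gy xy.
apply: bigcup_finite => // x _; apply: bigcup_finite => // z _.
apply: bigcup_finite => // y xy; apply: bigcup_finite => // z' _.
by apply: transporters => /pos_inj xy_eq; apply: (irr x); rewrite {2}xy_eq.
Qed.

End QuasiTransitiveAction.

Section HyperbolicPlane.
Variable R : realType.
Implicit Types (p q a : H2 R) (k : H2 R -> H2 R).

Definition xcoord p : R := (set_val p).1.
Definition ycoord p : R := (set_val p).2.

Lemma ycoord_gt0 p : 0 < ycoord p.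
Proof. rewrite /ycoord set_valE; exact: (set_valP p). Qed.

Lemma H2_eq p q : xcoord p = xcoord q -> ycoord p = ycoord q -> p = q.
Proof.
rewrite /xcoord /ycoord !set_valE => ex ey; apply: val_inj.
by move: ex ey; case: (\val p) => ? ?; case: (\val q) => ? ? /= -> ->.
Qed.

Definition cosh_hdist p q : R :=
  1 + ((xcoord p - xcoord q) ^+ 2 + (ycoord p - ycoord q) ^+ 2) /
      (2 * ycoord p * ycoord q).

Lemma hdistE p q : hdist p q = acosh (cosh_hdist p q).
Proof. by []. Qed.

Lemma cosh_hdist_ge1 p q : 1 <= cosh_hdist p q.
Proof.
rewrite lerDl divr_ge0 ?addr_ge0 ?sqr_ge0 //.
by rewrite !mulr_ge0 // ltW // ycoord_gt0.
Qed.

Lemma cosh_hdist_gt1 p q : p <> q -> 1 < cosh_hdist p q.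
Proof.
move=> pq; rewrite ltrDl divr_gt0 ?mulr_gt0 ?ycoord_gt0 //.
rewrite lt_neqAle addr_ge0 ?sqr_ge0 // andbT eq_sym paddr_eq0 ?sqr_ge0 //.
rewrite !sqrf_eq0 !subr_eq0; apply/negP => /andP[/eqP ex /eqP ey].
exact: pq (H2_eq ex ey).
Qed.

Lemma cosh_hdist_xx p : cosh_hdist p p = 1.
Proof. by rewrite /cosh_hdist !subrr expr0n /= addr0 mul0r addr0. Qed.

Lemma acosh_inj : {in [pred x : R | 1 <= x] &, injective (@acosh R)}.
Proof.
have pos (x : R) : 1 <= x -> x + Num.sqrt (x ^+ 2 - 1) \is Num.pos.
  by move=> x1; rewrite posrE (lt_le_trans ltr01) // ler_wpDr // sqrtr_ge0.
have mono (x y : R) : 1 <= x -> x < y ->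
    x + Num.sqrt (x ^+ 2 - 1) < y + Num.sqrt (y ^+ 2 - 1).
  move=> x1 xy; apply: ltr_leD => //; rewrite ler_sqrt; last first.
    by rewrite subr_ge0 expr_ge1 //; lra.
  by rewrite lerD2r ler_pXn2r // ?nnegrE; lra.
move=> x y; rewrite !inE => x1 y1 /(ln_inj (pos _ x1) (pos _ y1)) e.
by case: (ltgtP x y) => // [/(mono _ _ x1)|/(mono _ _ y1)]; rewrite e ltxx.
Qed.

Definition hdist_preserving k := forall p q, hdist (k p) (k q) = hdist p q.

Lemma cosh_hdist_preserved k : hdist_preserving k ->
  forall p q, cosh_hdist (k p) (k q) = cosh_hdist p q.
Proof.
move=> kP p q; apply: acosh_inj; rewrite ?inE ?cosh_hdist_ge1 //.
by rewrite -!hdistE kP.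
Qed.

Lemma hdist_preserving_inj k : hdist_preserving k -> injective k.
Proof.
move=> /cosh_hdist_preserved kP p q kpq; apply: contrapT => pq.
by move: (cosh_hdist_gt1 pq); rewrite -kP kpq cosh_hdist_xx ltxx.
Qed.

Local Notation vec := (R * R * R)%type.
Implicit Types (u v w d n : vec).

(* A Lorentzian form on R^3 in light-cone coordinates, for which [hyperboloid]
   below is the hyperboloid model of H^2. *)
Definition lorentz u v : R := u.1.1 * v.2 + u.2 * v.1.1 - 2 * u.1.2 * v.1.2.

Definition lorentz_cross w v : vec :=
  (2 * w.1.1 * v.1.2 - 2 * w.1.2 * v.1.1,
   w.1.1 * v.2 - w.2 * v.1.1,
   2 * w.1.2 * v.2 - 2 * w.2 * v.1.2).

Definition lorentz_reflect n u : vec := u - (2 * lorentz u n / lorentz n n) *: n.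

Lemma lorentzC u v : lorentz u v = lorentz v u.
Proof. rewrite /lorentz; ring. Qed.

Lemma lorentzBl u u' v : lorentz (u - u') v = lorentz u v - lorentz u' v.
Proof. rewrite /lorentz /=; ring. Qed.

Lemma vec_eq u v : u.1.1 = v.1.1 -> u.1.2 = v.1.2 -> u.2 = v.2 -> u = v.
Proof. by case: u => [[? ?] ?]; case: v => [[? ?] ?] /= -> -> ->. Qed.

Lemma lorentz_cross_self w v : lorentz (lorentz_cross w v) (lorentz_cross w v) =
  - 2 * (lorentz w v ^+ 2 - lorentz w w * lorentz v v).
Proof. rewrite /lorentz /=; ring. Qed.

Lemma lorentz_cross_decomp d w v : let n := lorentz_cross w v in
  lorentz n n *: d = lorentz d n *: n +
    2 *: ((lorentz d w * lorentz v v - lorentz d v * lorentz w v) *: w +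
          (lorentz d v * lorentz w w - lorentz d w * lorentz w v) *: v).
Proof. by apply: vec_eq; rewrite /lorentz /= /GRing.scale /=; ring. Qed.

Lemma lorentz_orthogonal_cross d w v : let n := lorentz_cross w v in
  lorentz n n != 0 -> lorentz d w = 0 -> lorentz d v = 0 ->
  d = (lorentz d n / lorentz n n) *: n.
Proof.
move=> n n0 dw dv; apply: (scalerI n0).
rewrite scalerA mulrC divfK // lorentz_cross_decomp dw dv.
by rewrite !(mul0r, subrr, scale0r, addr0) scaler0 addr0.
Qed.

Lemma lorentz_shift u u' n s t :
  lorentz (u + s *: n) (u' + t *: n) =
  lorentz u u' + s * lorentz n u' + t * lorentz u n + s * t * lorentz n n.
Proof. rewrite /lorentz /= /GRing.scale /=; ring. Qed.

Definition hyperboloid p : vec :=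
  ((xcoord p ^+ 2 + ycoord p ^+ 2) / ycoord p, xcoord p / ycoord p, (ycoord p)^-1).

Lemma lorentz_hyperboloid p q :
  lorentz (hyperboloid p) (hyperboloid q) = 2 * cosh_hdist p q.
Proof.
have p0 := ycoord_gt0 p; have q0 := ycoord_gt0 q.
by rewrite /lorentz /cosh_hdist /=; field; rewrite !lt0r_neq0.
Qed.

Lemma hyperboloid_inj : injective hyperboloid.
Proof.
move=> p q [_ ex /invr_inj ey]; apply: H2_eq => //.
move: ex; rewrite ey => /(congr1 ( *%R^~ (ycoord q))).
by rewrite !divfK // lt0r_neq0 // ycoord_gt0.
Qed.

Lemma lorentz_cross_hyperboloid_neq0 p q
    (n := lorentz_cross (hyperboloid p) (hyperboloid q)) :
  p <> q -> lorentz n n != 0.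
Proof.
move=> /cosh_hdist_gt1 pq.
rewrite /n lorentz_cross_self !lorentz_hyperboloid !cosh_hdist_xx.
by move: (cosh_hdist p q) pq => e e1; apply: ltr0_neq0; nra.
Qed.

Lemma hdist_preserving_reflect k1 k2 p q c :
  hdist_preserving k1 -> hdist_preserving k2 -> p <> q ->
  k1 p = k2 p -> k1 q = k2 q -> k1 c <> k2 c ->
  forall a, hyperboloid (k2 a) = lorentz_reflect
    (lorentz_cross (hyperboloid (k1 p)) (hyperboloid (k1 q))) (hyperboloid (k1 a)).
Proof.
move=> k1P k2P pq kp kq kc a.
have B12 x y : lorentz (hyperboloid (k2 x)) (hyperboloid (k2 y)) =
               lorentz (hyperboloid (k1 x)) (hyperboloid (k1 y)).
  by rewrite !lorentz_hyperboloid !cosh_hdist_preserved.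
set w := hyperboloid (k1 p); set v := hyperboloid (k1 q); set n := lorentz_cross w v.
have n0 : lorentz n n != 0.
  by apply: lorentz_cross_hyperboloid_neq0 => /(hdist_preserving_inj k1P).
(* [hyperboloid (k1 x)] and [hyperboloid (k2 x)] have the same products with
   [w] and [v], hence differ by a multiple [tau x] of [n]; [quad] says that
   [k2] also preserves the products between such points. *)
pose tau x := lorentz (hyperboloid (k2 x) - hyperboloid (k1 x)) n / lorentz n n.
have shift x : hyperboloid (k2 x) = hyperboloid (k1 x) + tau x *: n.
  apply/eqP; rewrite addrC -subr_eq; apply/eqP.
  by apply: (@lorentz_orthogonal_cross _ w v n0); rewrite lorentzBl /w /v -B12 ?kp ?kq subrr.
have quad x y : tau x * lorentz (hyperboloid (k1 y)) n +
    tau y * lorentz (hyperboloid (k1 x)) n + tau x * tau y * lorentz n n = 0.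
  have := B12 x y; rewrite !shift lorentz_shift (lorentzC n) => /eqP.
  by rewrite -subr_eq0 => /eqP <-; ring.
have tau_c : tau c != 0.
  by apply/eqP => tc; apply: kc; apply: hyperboloid_inj; rewrite shift tc scale0r addr0.
rewrite shift (reflection_coeff n0 tau_c _ (quad a c)); last by rewrite -(quad a a); ring.
by rewrite /lorentz_reflect !mulNr scaleNr.
Qed.

Lemma finite_hdist_preserving_transporters p q p' q' : p <> q ->
  finite_set [set k | [/\ hdist_preserving k, k p = p' & k q = q']].
Proof.
move=> pq; set S := [set k | _].
have [[k0 [k0P k0p k0q]]|] := pselect (exists k0, S k0); last first.
  by move/forallNP => S0; apply: (sub_finite_set (B := set0)) => // k /S0.
have reflect_k0 k : S k -> k <> k0 -> forall a, hyperboloid (k a) =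
    lorentz_reflect (lorentz_cross (hyperboloid p') (hyperboloid q')) (hyperboloid (k0 a)).
  move=> [kP kp kq] kk0.
  have /existsNP[c kc] : ~ forall c, k0 c = k c.
    by move=> e; apply: kk0; apply/funext => c; rewrite e.
  rewrite -k0p -k0q; apply: (hdist_preserving_reflect k0P kP pq _ _ kc).
    by rewrite k0p kp.
  by rewrite k0q kq.
have [[k1 [Sk1 k1k0]]|] := pselect (exists k1, S k1 /\ k1 <> k0); last first.
  move/forallNP => only_k0; apply: (sub_finite_set (B := [set k0])) => // k Sk.
  by apply: contrapT => kk0; apply: (only_k0 k).
apply: (sub_finite_set (B := [set k0; k1])) => [k Sk|]; last exact: finite_set2.
have [-> | kk0] := pselect (k = k0); [by left | right].
by apply/funext => a; apply: hyperboloid_inj; rewrite (reflect_k0 k) // (reflect_k0 k1).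
Qed.

End HyperbolicPlane.

Theorem proposition4p2 (R : realType) (V : Type) (adj : V -> V -> Prop)
  (pos : V -> H2 R) (arc : V -> V -> R -> H2 R) (G : set (H2 R -> H2 R)) :
  is_map adj pos arc ->
  graph_locally_finite adj ->
  one_ended adj ->
  vertices_locally_finite pos ->
  isom_subgroup G ->
  acts_on_map adj pos arc G ->
  quasi_transitive pos G ->
  finitely_generated G.
Proof.
move=> [[[_ irr] conn infV] [pos_inj _]] lf _ _ [G_iso _ G_comp G_inv] act [F [finF orbits]].
have G_act g : G g -> exists sigma : V -> V,
    (forall v, pos (sigma v) = g (pos v)) /\ (forall u v, adj u v -> adj (sigma u) (sigma v)).
  by move=> /act[_ _ [sigma [_ sigmaE sigma_adj]]]; exists sigma; split => // u v /sigma_adj.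
have nbr x : exists y, adj x y.
  have [v [_ vx]] := infinite_setN0 (infinite_setD infV (finite_set1 x)).
  exact: reach_neighbour (conn x v) vx.
have [v0 _] := infinite_setN0 infV.
exists (nbhd_movers adj pos G F); split.
- apply: finite_nbhd_movers => // P Q P' Q' PQ.
  apply: sub_finite_set (finite_hdist_preserving_transporters P' Q' PQ).
  by move=> g [Gg [gP gQ]]; split => //; exact: (G_iso g Gg).2.
- by move=> g [].
- exact: nbhd_movers_generate v0 conn.
Qed.
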